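(* There is an orientation of $\mathbb{RP}^3$ such that for every edge-face $\sigma$ and every $\mathrm{PGL}(4)$-class $[\mathcal{F}]$ of tetrahedra of flags, the projective tetrahedron $\mathrm{T}_{\mathcal{F}}$ associated to the $\sigma$-standard representative $\mathcal{F}$ of $[\mathcal{F}]$ is positively oriented, i.e. the simplicial identification of the standard simplex with $\mathrm{T}_{\mathcal{F}}$ sending the $m$-th vertex to $V_m$ is orientation preserving.
   Context: A flag is $(V,\eta)$, $\eta$ a plane of $\mathbb{RP}^3$ through the point $V$; non-degenerate tuples satisfy $\eta_i(V_j)=0\iff i=j$. A tetrahedron of flags $\mathcal{F}=(V_m,\eta_m)_{m=1}^4$ is a non-degenerate ordered quadruple of flags with $V_m$ not coplanar such that there is a (necessarily unique) projective tetrahedron $\mathrm{T}_{\mathcal{F}}$ with vertices $V_1,\dots,V_4$ whose interior misses every $\eta_m$. Edge-faces $\sigma=(ij)k$ are even permutations $[ijkl]$ of $\{1,2,3,4\}$. With $t_\sigma=t_{ijk}$, $e_\sigma=e_{ij}$ the triple and edge ratios ($t_{ijk}=\frac{\bar\eta_i(\bar V_j)\bar\eta_j(\bar V_k)\bar\eta_k(\bar V_i)}{\bar\eta_i(\bar V_k)\bar\eta_j(\bar V_i)\bar\eta_k(\bar V_j)}$, $e_{ij}=\frac{\bar\eta_i(\bar V_k)\bar\eta_j(\bar V_l)}{\bar\eta_i(\bar V_l)\bar\eta_j(\bar V_k)}$), the $\sigma$-standard representative of $[\mathcal{F}]$ is the unique representative with $(V_i,\eta_i)=([e_1],[e_2^*])$,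 $(V_j,\eta_j)=([e_2],[e_1^*])$, $(V_k,\eta_k)=([e_1+e_2+e_3],[t_\sigma e_1^*+e_2^*-(t_\sigma+1)e_3^*])$, $V_l=[e_\sigma e_1+e_2+X_\sigma e_3-e_4]$, $\eta_l=[e_{il}e_{lj}e_1^*+e_2^*-\bar\mu e_3^*+\bar\mu(Y-X_\sigma)e_4^*]$, where $\mu_\sigma=e_{jk}e_{ki}-e_{jk}+1$, $\bar\mu=e_{il}e_{lj}-e_{il}+1$, $X_\sigma=\mu_\sigma t_\sigma e_\sigma/(t_\sigma+1)$, $Y=(t_{jil}+1)/(t_{jil}\bar\mu)$ (existence and uniqueness of this representative is known). *)

(* Projective 3-space over an arbitrary real field R
   (in particular the reals); points and planes of RP^3 are represented
   by nonzero lifts in R^4 (row vectors) resp. (R^4)^* (row vectors,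
   paired with points by the standard dot product). *)
From HB Require Import structures.
From mathcomp Require Import all_boot all_order all_algebra all_fingroup.
Set Implicit Arguments. Unset Strict Implicit. Unset Printing Implicit Defensive.
Import Order.TTheory GRing.Theory Num.Theory.
Local Open Scope ring_scope.

Section Defs.
Variable R : realFieldType.

Definition pair4 (eta v : 'rV[R]_4) : R := \sum_(k < 4) eta 0 k * v 0 k.

Definition vec4 (a b c d : R) : 'rV[R]_4 :=
  \row_(k < 4) nth 0 [:: a; b; c; d] k.

Definition proj_eq (u w : 'rV[R]_4) : Prop :=
  u != 0 /\ exists c : R, c != 0 /\ w = c *: u.

(* A quadruple of flags F = (V_m, eta_m)_{m=1..4}, given by lifts
   V m, eta m (indices m : 'I_4, i.e. 0..3 stand for 1..4). *)
Definition flags4 (V eta : 'I_4 -> 'rV[R]_4) : Prop :=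
  forall m, V m != 0 /\ eta m != 0 /\ pair4 (eta m) (V m) = 0.

Definition nondeg4 (V eta : 'I_4 -> 'rV[R]_4) : Prop :=
  forall a b : 'I_4, pair4 (eta a) (V b) = 0 <-> a = b.

Definition rows4 (v : 'I_4 -> 'rV[R]_4) : 'M[R]_4 := \matrix_(m < 4, k < 4) v m 0 k.

(* A projective tetrahedron with vertices V_1..V_4 is
   T = { [sum_m t_m v_m] : t_m >= 0, not all 0 } for lifts v_m of V_m;
   its interior is { [sum_m t_m v_m] : all t_m > 0 }.
   [tet_lifts V eta v] : the lifts v define a projective tetrahedron with
   vertices V_m whose interior misses every plane eta_m. *)
Definition tet_lifts (V eta v : 'I_4 -> 'rV[R]_4) : Prop :=
  (forall m, proj_eq (V m) (v m)) /\
  forall (m : 'I_4) (t : 'I_4 -> R), (forall n, 0 < t n) ->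
    pair4 (eta m) (\sum_(n < 4) t n *: v n) != 0.

Definition tet_of_flags (V eta : 'I_4 -> 'rV[R]_4) : Prop :=
  [/\ flags4 V eta, nondeg4 V eta, \det (rows4 V) != 0 &
      exists v, tet_lifts V eta v].

Definition pgl_equiv (V eta V' eta' : 'I_4 -> 'rV[R]_4) : Prop :=
  exists A : 'M[R]_4, A \in unitmx /\
    forall m, proj_eq (V m *m A) (V' m) /\ proj_eq (eta m *m invmx A^T) (eta' m).

Definition tri_ratio (V eta : 'I_4 -> 'rV[R]_4) (a b c : 'I_4) : R :=
  pair4 (eta a) (V b) * pair4 (eta b) (V c) * pair4 (eta c) (V a) /
  (pair4 (eta a) (V c) * pair4 (eta b) (V a) * pair4 (eta c) (V b)).

(* edge ratio e_{ab}, where (c,d) are such that [a b c d] is an even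
   permutation of {1,2,3,4} (the caller supplies such c, d) *)
Definition edge_ratio (V eta : 'I_4 -> 'rV[R]_4) (a b c d : 'I_4) : R :=
  pair4 (eta a) (V c) * pair4 (eta b) (V d) /
  (pair4 (eta a) (V d) * pair4 (eta b) (V c)).

Definition o0 : 'I_4 := inord 0.
Definition o1 : 'I_4 := inord 1.
Definition o2 : 'I_4 := inord 2.
Definition o3 : 'I_4 := inord 3.

(* (V', eta') is the sigma-standard representative of the class of
   (V, eta), where sigma = [i j k l] = [s 1, s 2, s 3, s 4].
   Even-permutation bookkeeping for the edge ratios used:
     e_{ij}: [i j k l]; e_{jk}: [j k i l]; e_{ki}: [k i j l];
     e_{il}: [i l j k]; e_{lj}: [l j i k]   (all even). *)
Definition std_rep (s : 'S_4) (V eta V' eta' : 'I_4 -> 'rV[R]_4) : Prop :=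
  let i := s o0 in let j := s o1 in let k := s o2 in let l := s o3 in
  let ts := tri_ratio V eta i j k in
  let es := edge_ratio V eta i j k l in
  let e_jk := edge_ratio V eta j k i l in
  let e_ki := edge_ratio V eta k i j l in
  let e_il := edge_ratio V eta i l j k in
  let e_lj := edge_ratio V eta l j i k in
  let t_jil := tri_ratio V eta j i l in
  let mu := e_jk * e_ki - e_jk + 1 in
  let mub := e_il * e_lj - e_il + 1 in
  let X := mu * ts * es / (ts + 1) in
  let Y := (t_jil + 1) / (t_jil * mub) in
  [/\ pgl_equiv V eta V' eta',
      proj_eq (vec4 1 0 0 0) (V' i) /\ proj_eq (vec4 0 1 0 0) (eta' i),
      proj_eq (vec4 0 1 0 0) (V' j) /\ proj_eq (vec4 1 0 0 0) (eta' j),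
      proj_eq (vec4 1 1 1 0) (V' k) /\ proj_eq (vec4 ts 1 (- (ts + 1)) 0) (eta' k) &
      proj_eq (vec4 es 1 X (-1)) (V' l) /\
      proj_eq (vec4 (e_il * e_lj) 1 (- mub) (mub * (Y - X))) (eta' l)].

(* An orientation of RP^3 is induced by an orientation of R^4, encoded by
   o = 1 (standard) or o = -1 (opposite). The simplicial map from the
   standard simplex to the tetrahedron with lifts v (m-th vertex |-> V_m)
   is orientation preserving iff o * det(v_1,...,v_4) > 0. *)
Definition pos_oriented (o : R) (v : 'I_4 -> 'rV[R]_4) : Prop :=
  0 < o * \det (rows4 v).

End Defs.

(* In sigma-standard position the lifts of V_i, V_j, V_k, V_l are
   a e_1, b e_2, c (e_1 + e_2 + e_3) and d (e_sigma e_1 + e_2 + X e_3 - e_4):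
   a lower triangular matrix of determinant -abcd.  A positive combination of
   the lifts lies in the interior of the tetrahedron, so it is not killed by
   eta_i = [e_2^*] nor by eta_j = [e_1^*]; hence the nonzero values of e_2^*
   (namely b, c, d) share a sign, and so do those of e_1^* (among them a, c).
   Thus abcd > 0, and since sigma is even, the determinant of the lifts in
   their original order is negative: the opposite of the standard orientation
   works for every sigma and every class of tetrahedra of flags. *)
From HB Require Import structures.
From mathcomp Require Import all_boot all_order all_algebra all_fingroup.
From mathcomp Require Import ring lra.
Set Implicit Arguments. Unset Strict Implicit. Unset Printing Implicit Defensive.
Import Order.TTheory GRing.Theory Num.Theory.
Local Open Scope ring_scope.

Section Orientation.
Variable R : realFieldType.

Lemma mulr_self_gt0 (x : R) : x != 0 -> 0 < x * x.
Proof. by move=> x0; rewrite -expr2 exprn_even_gt0 //= x0 orbT. Qed.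

Lemma opp_sign_pos_comb (x y r : R) : x * y < 0 ->
  exists t u, [/\ 0 < t, 0 < u & t * x + u * y = r].
Proof.
wlog x_gt0 : x y / 0 < x => [hwlog xy_lt0 | xy_lt0].
  have [x_gt0 | x_le0] := ltP 0 x; first exact: hwlog.
  have y_gt0 : 0 < y by nra.
  have [|u [t [u_gt0 t_gt0 E]]] := hwlog y x y_gt0; first by rewrite mulrC.
  by exists t, u; rewrite addrC.
have y_lt0 : y < 0 by rewrite -(pmulr_rlt0 _ x_gt0).
have r_le := ler_norm r; have r_ge0 := normr_ge0 r.
exists ((1 + `|r|) / x), ((1 + `|r| - r) / - y); split.
- by apply: divr_gt0 => //; lra.
- by apply: divr_gt0; lra.
- by field; rewrite (ltr0_neq0 y_lt0) (lt0r_neq0 x_gt0).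
Qed.

Lemma pos_comb_same_sign (I : finType) (w : I -> R) :
  (forall t : I -> R, (forall k, 0 < t k) -> \sum_k t k * w k != 0) ->
  forall m n, w m != 0 -> w n != 0 -> 0 < w m * w n.
Proof.
move=> no_root m n wm0 wn0; have [<- | nm] := eqVneq n m; first exact: mulr_self_gt0.
rewrite ltNge; apply/negP => le0.
have lt0 : w m * w n < 0 by rewrite lt_neqAle mulf_neq0.
pose r := \sum_(k | (k != m) && (k != n)) w k.
have [tm [tn [tm_gt0 tn_gt0 E]]] := opp_sign_pos_comb (- r) lt0.
pose t k := if k == m then tm else if k == n then tn else 1.
have t_gt0 k : 0 < t k by rewrite /t; do 2?case: ifP.
move/negP: (no_root t t_gt0); apply; apply/eqP.
rewrite (bigD1 m) //= (bigD1 n) //= /t eqxx (negbTE nm) eqxx addrA E.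
rewrite (eq_bigr w) ?addNr // => k /andP[/negbTE -> /negbTE ->]; exact: mul1r.
Qed.

Lemma big_ord4 (T : Type) (idx : T) (op : Monoid.law idx) (F : 'I_4 -> T) :
  \big[op/idx]_(m < 4) F m = op (F o0) (op (F o1) (op (F o2) (F o3))).
Proof.
rewrite !big_ord_recl big_ord0 Monoid.mulm1.
by congr (op (F _) (op (F _) (op (F _) (F _)))); apply: ord_inj; rewrite /= inordK.
Qed.

Lemma ord4_cases (i : 'I_4) : [\/ i = o0, i = o1, i = o2 | i = o3].
Proof.
by case: i => [[|[|[|[|//]]]] ?];
  [constructor 1 | constructor 2 | constructor 3 | constructor 4];
  apply: ord_inj; rewrite /= inordK.
Qed.

Lemma pair4_vec4 (a b c d a' b' c' d' : R) :
  pair4 (vec4 a b c d) (vec4 a' b' c' d') = a * a' + b * b' + c * c' + d * d'.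
Proof. by rewrite /pair4 big_ord4 /= !mxE /= ?inordK //= !addrA. Qed.

Lemma pair4Zl (p : R) (e w : 'rV[R]_4) : pair4 (p *: e) w = p * pair4 e w.
Proof. by rewrite /pair4 mulr_sumr; apply: eq_bigr => k _; rewrite mxE mulrA. Qed.

Lemma pair4Zr (p : R) (e w : 'rV[R]_4) : pair4 e (p *: w) = p * pair4 e w.
Proof. by rewrite /pair4 mulr_sumr; apply: eq_bigr => k _; rewrite mxE mulrCA. Qed.

Lemma pair4_sum (I : finType) (e : 'rV[R]_4) (t : I -> R) (w : I -> 'rV[R]_4) :
  pair4 e (\sum_n t n *: w n) = \sum_n t n * pair4 e (w n).
Proof.
rewrite /pair4; under eq_bigr => k _ do rewrite summxE mulr_sumr.
by rewrite exchange_big; apply: eq_bigr => n _; rewrite -pair4Zr.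
Qed.

Lemma proj_eq_trans (u w x : 'rV[R]_4) : proj_eq u w -> proj_eq w x -> proj_eq u x.
Proof.
move=> [u0 [c [c0 ->]]] [_ [c' [c'0 ->]]]; split=> //.
by exists (c' * c); rewrite mulf_neq0 // scalerA.
Qed.

Definition same_sign_on (e : 'rV[R]_4) (w : 'I_4 -> 'rV[R]_4) : Prop :=
  forall m n, pair4 e (w m) != 0 -> pair4 e (w n) != 0 ->
    0 < pair4 e (w m) * pair4 e (w n).

Lemma tet_lifts_same_sign (V eta v : 'I_4 -> 'rV[R]_4) m :
  tet_lifts V eta v -> same_sign_on (eta m) v.
Proof.
move=> [_ tet]; apply: pos_comb_same_sign => t t_gt0.
by rewrite -pair4_sum; apply: tet.
Qed.

Lemma same_sign_onZ (p : R) e w : p != 0 -> same_sign_on (p *: e) w -> same_sign_on e w.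
Proof.
move=> p0 sign m n em0 en0; have := sign m n; rewrite !pair4Zl !mulf_neq0 //.
have -> : p * pair4 e (w m) * (p * pair4 e (w n)) =
          p * p * (pair4 e (w m) * pair4 e (w n)) by ring.
by move/(_ isT isT); rewrite pmulr_rgt0 ?mulr_self_gt0.
Qed.

Lemma same_sign_on_comp e w (f : 'I_4 -> 'I_4) :
  same_sign_on e w -> same_sign_on e (w \o f).
Proof. by move=> sign m n; apply: sign. Qed.

Lemma det_rows4_perm (s : 'S_4) (v : 'I_4 -> 'rV[R]_4) :
  \det (rows4 (v \o s)) = (-1) ^+ s * \det (rows4 v).
Proof.
have -> : rows4 (v \o s) = perm_mx s *m rows4 v.
  by rewrite -row_permE; apply/matrixP => i j; rewrite !mxE.
by rewrite det_mulmx det_perm.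
Qed.

Section StandardLifts.
Variables (w : 'I_4 -> 'rV[R]_4) (a b c d es X : R).
Hypotheses (w0 : w o0 = a *: vec4 1 0 0 0) (w1 : w o1 = b *: vec4 0 1 0 0)
           (w2 : w o2 = c *: vec4 1 1 1 0) (w3 : w o3 = d *: vec4 es 1 X (-1)).

Lemma det_rows4_std : \det (rows4 w) = - (a * b * c * d).
Proof.
have entry i j : rows4 w i j = w i 0 j by rewrite mxE.
have lower : is_trig_mx (rows4 w).
  apply/is_trig_mxP => i j.
  case: (ord4_cases i) => ->; case: (ord4_cases j) => ->; rewrite /= ?inordK // => _;
  by rewrite entry ?w0 ?w1 ?w2 ?w3 !mxE /= inordK //= mulr0.
rewrite det_trig // big_ord4 !entry w0 w1 w2 w3 !mxE /= ?inordK //=; ring.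
Qed.

Hypotheses (a0 : a != 0) (b0 : b != 0) (c0 : c != 0) (d0 : d != 0).
Hypotheses (sign_e2 : same_sign_on (vec4 0 1 0 0) w)
           (sign_e1 : same_sign_on (vec4 1 0 0 0) w).

Let simp_pair := (pair4Zr, pair4_vec4, mulr0, mul0r, mulr1, add0r, addr0).

Lemma std_lifts_sign : 0 < a * b * c * d.
Proof.
have bc : 0 < b * c by have := @sign_e2 o1 o2; rewrite w1 w2 !simp_pair; apply.
have cd : 0 < c * d by have := @sign_e2 o2 o3; rewrite w2 w3 !simp_pair; apply.
have ac : 0 < a * c by have := @sign_e1 o0 o2; rewrite w0 w2 !simp_pair; apply.
have : 0 < (a * c) * (b * c) * (c * d) by apply: mulr_gt0 => //; apply: mulr_gt0.
have -> : a * c * (b * c) * (c * d) = c * c * (a * b * c * d) by ring.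
by rewrite pmulr_rgt0 // mulr_self_gt0.
Qed.

Lemma det_rows4_std_lt0 : \det (rows4 w) < 0.
Proof. by rewrite det_rows4_std oppr_lt0 std_lifts_sign. Qed.

End StandardLifts.
End Orientation.

Theorem lemma2p7 (R : realFieldType) :
  exists o : R, (o = 1 \/ o = -1) /\
    forall s : 'S_4, ~~ odd_perm s ->
    forall V eta : 'I_4 -> 'rV[R]_4, tet_of_flags V eta ->
    forall V' eta' : 'I_4 -> 'rV[R]_4, std_rep s V eta V' eta' ->
    forall v : 'I_4 -> 'rV[R]_4, tet_lifts V' eta' v ->
      pos_oriented o v.
Proof.
exists (-1); split; first by right.
move=> s s_even V eta _ V' eta' [_ [Vi ei] [Vj ej] [Vk _] [Vl _]] v lifts.
have sign_on p e m : p != 0 -> eta' m = p *: e -> same_sign_on e (v \o s).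
  move=> p0 eE; apply/same_sign_on_comp/(same_sign_onZ p0).
  by rewrite -eE; apply: tet_lifts_same_sign lifts.
have [_ [p [p0 eiE]]] := ei; have [_ [q [q0 ejE]]] := ej.
have [Vv _] := lifts.
have [_ [a [a0 va]]] := proj_eq_trans Vi (Vv (s o0)).
have [_ [b [b0 vb]]] := proj_eq_trans Vj (Vv (s o1)).
have [_ [c [c0 vc]]] := proj_eq_trans Vk (Vv (s o2)).
have [_ [d [d0 vd]]] := proj_eq_trans Vl (Vv (s o3)).
rewrite /pos_oriented mulN1r oppr_gt0.
have := det_rows4_perm s v; rewrite (negbTE s_even) expr0 mul1r => <-.
exact: (det_rows4_std_lt0 (w := v \o s) va vb vc vd a0 b0 c0 d0
          (sign_on _ _ _ p0 eiE) (sign_on _ _ _ q0 ejE)).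
Qed.
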